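(* Let $\Gamma>0$. For $M\ge1$ and $s>\sqrt M$ define $$\tilde\rho^{M,{\rm d}}(s)=\frac{e^{\beta f(\Gamma,1/\pi)}}{M^{\Gamma/4}}\exp\Big(-\frac{M\Gamma}{2}\Big(\frac{s^2}{M}-1\Big)+M\Gamma\log\frac{s}{\sqrt M}-\frac\Gamma2\log\Big(\frac{s^2}{M}-1\Big)\Big),$$ and for $s<0$ define $$\tilde\rho^{M,{\rm c}}(s)=\Big(\frac{2\pi}{\sqrt M}\Big)^{\Gamma/2}e^{\beta f(\Gamma,1)}\frac{e^{-\Gamma\pi s^2+\Gamma\pi s/\sqrt M}}{(1-e^{4\pi s/\sqrt M})^{\Gamma/2}}.$$ Then for every fixed $y<0$, $$\lim_{N\to\infty}\tilde\rho^{N+1,{\rm d}}\big(\sqrt N-y\big)=\lim_{N\to\infty}\frac1\pi\,\tilde\rho^{N,{\rm c}}\big(y/\sqrt\pi\big)=e^{\beta f(\Gamma,1/\pi)}\frac{e^{-\Gamma y^2}}{(2|y|)^{\Gamma/2}}.$$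
   Context: $\beta f(\Gamma,\rho_b)$ is the dimensionless free energy per particle of the two-dimensional one-component plasma at coupling $\Gamma$ and background density $\rho_b$: $\beta f(\Gamma,\rho_b)=\lim_{N\to\infty}-\frac1N\log Z^{\rm d}_{N,\Gamma}(\rho_b)$ with $Z^{\rm d}_{N,\Gamma}(\rho_b)=\frac1{N!}\int_{(\mathbb R^2)^N}e^{-\Gamma N^2(\frac12\log R-\frac38)}e^{-\pi\Gamma\rho_b\sum_j|\vec r_j|^2/2}\prod_{j<k}|\vec r_k-\vec r_j|^\Gamma\,d\vec r_1\cdots d\vec r_N$, $R=\sqrt{N/(\pi\rho_b)}$. It is known that $\beta f(\Gamma,\rho_b)=(1-\frac\Gamma4)\log\rho_b+g(\Gamma)$ for a function $g$ independent of $\rho_b$. The functions $\tilde\rho^{M,{\rm d}}$ and $\tilde\rho^{M,{\rm c}}$ are the large-deviation forms (without the $o(1)$ terms) of the one-body density outside the plasma in the soft disk ($\rho_b=1/\pi$, unscaled radial coordinate $s$) and soft cylinder ($\rho_b=1$, $L=W=\sqrt M$, unscaled axial coordinate $s$) respectively. *)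

From Stdlib Require Import Reals Lra.
From Coquelicot Require Import Coquelicot.
Open Scope R_scope.

Definition free_energy_scaling (bf : R -> R -> R) : Prop :=
  exists g : R -> R, forall G rho, 0 < G -> 0 < rho ->
    bf G rho = (1 - G / 4) * ln rho + g G.

(* Large-deviation form of the density outside the soft disk
   (rho_b = 1/pi), radial coordinate s > sqrt M. *)
Definition rho_d (bf : R -> R -> R) (G M s : R) : R :=
  exp (bf G (/ PI)) / Rpower M (G / 4) *
  exp (- (M * G / 2) * (s ^ 2 / M - 1) + M * G * ln (s / sqrt M)
       - G / 2 * ln (s ^ 2 / M - 1)).

(* Large-deviation form of the density outside the soft cylinder
   (rho_b = 1, L = W = sqrt M), axial coordinate s < 0. *)
Definition rho_c (bf : R -> R -> R) (G M s : R) : R :=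
  Rpower (2 * PI / sqrt M) (G / 2) * exp (bf G 1) *
  exp (- G * PI * s ^ 2 + G * PI * s / sqrt M) /
  Rpower (1 - exp (4 * PI * s / sqrt M)) (G / 2).

From Stdlib Require Import Reals Lra Lia.
From Coquelicot Require Import Coquelicot.
Open Scope R_scope.

(* Both densities are exponentials of explicit exponents, and the claim reduces to
   the limits of those exponents.  For the disk, with M = N + 1 and
   u = s^2/M - 1, the exponent is G/2 (M (ln(1+u) - u) - ln(sqrt M u)); here
   sqrt M u -> 2|y|, and the Taylor bound 0 <= ln(1+u) - u + u^2/2 <= u^3 shows
   M (ln(1+u) - u) -> -(2y)^2/2.  For the cylinder, with h = 1/sqrt N the exponent
   depends on N only through h -> 0 and (1 - e^{-c h})/h -> c, which is squeezed
   between c e^{-c h} and c.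
   The two limits agree because the scaling law gives
   beta f(G, 1) = beta f(G, 1/pi) + (1 - G/4) ln pi. *)

Lemma continuity_pt_ln x : 0 < x -> continuity_pt ln x.
Proof. intro Hx. apply derivable_continuous_pt. exists (/ x). now apply derivable_pt_lim_ln. Qed.

Lemma ln1p_taylor2_bounds u :
  0 <= u -> 0 <= ln (1 + u) - u + u ^ 2 / 2 <= u ^ 3.
Proof.
  intro Hu.
  set (f := fun x => ln (1 + x) - x + x ^ 2 / 2).
  assert (Hf' : forall x, 0 <= x -> is_derive f x (x ^ 2 / (1 + x))).
  { intros x Hx. unfold f. auto_derive; [lra | field; lra]. }
  destruct (MVT_gen f 0 u (fun x => x ^ 2 / (1 + x))) as [c [Hc Hfu]].
  - intros x Hx. apply Hf'. rewrite Rmin_left in Hx; lra.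
  - intros x Hx. rewrite Rmin_left in Hx by lra. apply continuity_pt_filterlim.
    apply (ex_derive_continuous f). eexists. apply Hf'. lra.
  - rewrite Rmin_left, Rmax_right in Hc by lra.
    unfold f in Hfu. rewrite Rplus_0_r, ln_1 in Hfu.
    replace (ln (1 + u) - u + u ^ 2 / 2) with (c ^ 2 / (1 + c) * u) by lra.
    assert (Hc2 : 0 <= c ^ 2 / (1 + c) <= u ^ 2).
    { split.
      - apply Rdiv_le_0_compat; nra.
      - apply Rle_trans with (c ^ 2); [|nra].
        apply Rmult_le_reg_r with (1 + c); [lra|].
        unfold Rdiv. rewrite Rmult_assoc, Rinv_l by lra. nra. }
    split; nra.
Qed.

Lemma one_sub_exp_neg_bounds T :
  0 <= T -> T * exp (- T) <= 1 - exp (- T) <= T.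
Proof.
  intro HT. pose proof (exp_ineq1_le (- T)). pose proof (exp_ineq1_le T).
  assert (HTT : exp T * exp (- T) = 1) by (rewrite <- exp_plus, Rplus_opp_r; apply exp_0).
  pose proof (exp_pos (- T)). split; nra.
Qed.

Lemma is_lim_seq_inv_sqrt (M : nat -> R) :
  is_lim_seq M p_infty -> is_lim_seq (fun n => / sqrt (M n)) 0.
Proof.
  intro HM. apply is_lim_seq_ext with (fun n => sqrt (/ M n)).
  { intro n. apply sqrt_inv. }
  rewrite <- sqrt_0. apply is_lim_seq_continuous; [apply continuity_pt_sqrt; lra|].
  apply (is_lim_seq_inv _ _ HM). discriminate.
Qed.

Lemma is_lim_seq_eventually_pos (u : nat -> R) (l : R) :
  is_lim_seq u l -> 0 < l -> eventually (fun n => 0 < u n).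
Proof.
  intros Hu Hl. apply is_lim_seq_spec in Hu. destruct (Hu (mkposreal l Hl)) as [N HN].
  exists N. intros n Hn. specialize (HN n Hn). simpl in HN.
  apply Rabs_lt_between in HN. lra.
Qed.

Lemma is_lim_seq_one_sub_exp_neg_div (c : R) (h : nat -> R) :
  0 <= c -> is_lim_seq h 0 -> eventually (fun n => 0 < h n) ->
  is_lim_seq (fun n => (1 - exp (- (c * h n))) / h n) c.
Proof.
  intros Hc Hh Hpos.
  apply (is_lim_seq_le_le_loc (fun n => c * exp (- (c * h n))) _ (fun _ => c)).
  - destruct Hpos as [N HN]. exists N. intros n Hn. specialize (HN n Hn).
    destruct (one_sub_exp_neg_bounds (c * h n)) as [Hlo Hhi]; [nra|].
    replace (1 - exp (- (c * h n))) with ((1 - exp (- (c * h n))) / h n * h n)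
      in Hlo, Hhi by (field; lra).
    split; apply Rmult_le_reg_r with (h n); nra.
  - replace (Finite c) with (Rbar_mult c (exp 0)) by (rewrite exp_0; simpl; f_equal; ring).
    apply is_lim_seq_scal_l.
    apply is_lim_seq_continuous; [apply derivable_continuous_pt, derivable_pt_exp|].
    rewrite <- Ropp_0. apply (is_lim_seq_opp _ (Finite 0)).
    rewrite <- (Rmult_0_r c). apply (is_lim_seq_scal_l _ c (Finite 0)), Hh.
  - apply is_lim_seq_const.
Qed.

Lemma is_lim_seq_mul_ln1p_sub (M u : nat -> R) (L : R) :
  0 < L -> (forall n, 0 < M n) -> is_lim_seq M p_infty ->
  is_lim_seq (fun n => sqrt (M n) * u n) L ->
  is_lim_seq (fun n => M n * (ln (1 + u n) - u n)) (- (L ^ 2 / 2)).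
Proof.
  intros HL HM0 HM Hq.
  set (q n := sqrt (M n) * u n) in Hq.
  assert (Hsq : forall n, sqrt (M n) * sqrt (M n) = M n)
    by (intro n; apply sqrt_sqrt, Rlt_le, HM0).
  assert (Hsq0 : forall n, 0 < sqrt (M n)) by (intro n; apply sqrt_lt_R0, HM0).
  assert (Hrem : is_lim_seq (fun n => M n * (ln (1 + u n) - u n + u n ^ 2 / 2)) 0).
  { apply (is_lim_seq_le_le_loc (fun _ => 0) _ (fun n => q n ^ 3 * / sqrt (M n))).
    - destruct (is_lim_seq_eventually_pos _ _ Hq HL) as [N HN].
      exists N. intros n Hn. specialize (HN n Hn). specialize (Hsq0 n).
      assert (Hu : 0 <= u n) by (unfold q in HN; nra).
      destruct (ln1p_taylor2_bounds _ Hu) as [Hlo Hhi]. specialize (HM0 n).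
      split; [nra|].
      replace (q n ^ 3 * / sqrt (M n)) with (M n * u n ^ 3)
        by (unfold q; set (r := sqrt (M n)); rewrite <- (Hsq n); fold r;
            field; apply Rgt_not_eq, Hsq0).
      apply Rmult_le_compat_l; lra.
    - apply is_lim_seq_const.
    - rewrite <- (Rmult_0_r (L ^ 3)).
      apply is_lim_seq_mult'; [|apply is_lim_seq_inv_sqrt, HM].
      apply (is_lim_seq_continuous (fun t => t ^ 3)); [|exact Hq].
      apply derivable_continuous_pt, derivable_pt_pow. }
  apply is_lim_seq_ext with (fun n => M n * (ln (1 + u n) - u n + u n ^ 2 / 2) - q n ^ 2 / 2).
  { intro n. unfold q. rewrite Rpow_mult_distr, pow2_sqrt by apply Rlt_le, HM0. lra. }
  rewrite <- (Rminus_0_l (L ^ 2 / 2)). apply is_lim_seq_minus'; [exact Hrem|].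
  apply (is_lim_seq_scal_r _ (/ 2) (Finite _)).
  apply (is_lim_seq_continuous (fun t => t ^ 2)); [|exact Hq].
  apply derivable_continuous_pt, derivable_pt_pow.
Qed.

Lemma rho_d_eq (bf : R -> R -> R) (G M s u : R) :
  0 < M -> 0 < s -> u = s ^ 2 / M - 1 -> 0 < u ->
  rho_d bf G M s =
  exp (bf G (/ PI)) * exp (G / 2 * (M * (ln (1 + u) - u) - ln (sqrt M * u))).
Proof.
  intros HM Hs Hu Hu0.
  assert (HsM : 0 < sqrt M) by now apply sqrt_lt_R0.
  assert (Hln_s : ln (s / sqrt M) = ln (1 + u) / 2).
  { replace (1 + u) with ((s / sqrt M) ^ 2).
    - rewrite ln_pow by (apply Rdiv_lt_0_compat; lra). simpl. field.
    - rewrite Hu. unfold Rdiv. rewrite Rpow_mult_distr, pow_inv, pow2_sqrt by lra.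
      field. lra. }
  assert (Hln_M : ln M = 2 * ln (sqrt M)).
  { rewrite <- (sqrt_sqrt M) at 1 by lra. rewrite ln_mult by lra. ring. }
  unfold rho_d, Rpower. rewrite <- Hu, Hln_s, ln_mult, Hln_M by lra.
  unfold Rdiv at 1. rewrite <- exp_Ropp, Rmult_assoc, <- exp_plus.
  f_equal. f_equal. field.
Qed.

Lemma rho_c_eq (bf : R -> R -> R) (G M s : R) :
  0 < M -> s < 0 ->
  let h := / sqrt M in
  / PI * rho_c bf G M s =
  exp (bf G 1 - ln PI + G / 2 * ln (2 * PI) - G * PI * s ^ 2 + G * PI * s * h
       - G / 2 * ln ((1 - exp (4 * PI * s * h)) / h)).
Proof.
  intros HM Hs h.
  pose proof PI_RGT_0 as HPI.
  assert (Hh : 0 < h) by now apply Rinv_0_lt_compat, sqrt_lt_R0.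
  assert (Hexp : exp (4 * PI * s * h) < 1).
  { rewrite <- exp_0. apply exp_increasing.
    assert (PI * s < 0) by nra. nra. }
  unfold rho_c, Rpower, Rdiv. fold h.
  replace (1 - exp (4 * PI * s * h)) with ((1 - exp (4 * PI * s * h)) * / h * h) at 1
    by (field; lra).
  rewrite !ln_mult by (try apply Rdiv_lt_0_compat; lra).
  rewrite <- (exp_ln (/ PI)), ln_Rinv by (try apply Rinv_0_lt_compat; lra).
  rewrite <- !exp_Ropp, <- !exp_plus. f_equal. ring.
Qed.

Lemma is_lim_seq_INR_S : is_lim_seq (fun N => INR N + 1) p_infty.
Proof.
  exact (is_lim_seq_plus _ _ p_infty 1 p_infty is_lim_seq_INR (is_lim_seq_const 1) eq_refl).
Qed.

Lemma disk_gap_lim (a : R) :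
  is_lim_seq (fun N => sqrt (INR N + 1) * ((sqrt (INR N) + a) ^ 2 / (INR N + 1) - 1)) (2 * a).
Proof.
  apply is_lim_seq_ext
    with (fun N => 2 * a * sqrt (1 - / (INR N + 1)) + (a ^ 2 - 1) * / sqrt (INR N + 1)).
  { intro N. pose proof (pos_INR N).
    assert (HS : 0 < sqrt (INR N + 1)) by (apply sqrt_lt_R0; lra).
    replace (1 - / (INR N + 1)) with (INR N / (INR N + 1)) by (field; lra).
    rewrite sqrt_div_alt by lra.
    replace ((sqrt (INR N) + a) ^ 2 / (INR N + 1) - 1)
      with ((2 * a * sqrt (INR N) + a ^ 2 - 1) / (INR N + 1))
      by (assert (Ex := sqrt_sqrt (INR N) (pos_INR N));
          set (x := sqrt (INR N)) in *; rewrite <- Ex; field; nra).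
    set (S := sqrt (INR N + 1)) in *.
    assert (E : S * S = INR N + 1) by (apply sqrt_sqrt; lra).
    rewrite <- E. field. lra. }
  replace (Finite (2 * a)) with (Finite (2 * a * 1 + (a ^ 2 - 1) * 0)) by (f_equal; ring).
  apply is_lim_seq_plus'; apply (is_lim_seq_scal_l _ _ (Finite _));
    [|apply is_lim_seq_inv_sqrt, is_lim_seq_INR_S].
  replace (Finite 1) with (Finite (sqrt (1 - 0))) by (rewrite Rminus_0_r, sqrt_1; reflexivity).
  apply is_lim_seq_continuous; [apply continuity_pt_sqrt; lra|].
  apply is_lim_seq_minus'; [apply is_lim_seq_const|].
  replace (Finite 0) with (Rbar_inv p_infty) by reflexivity.
  apply is_lim_seq_inv; [apply is_lim_seq_INR_S | discriminate].
Qed.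

Lemma rho_d_lim (bf : R -> R -> R) (G y : R) : y < 0 ->
  is_lim_seq (fun N => rho_d bf G (INR N + 1) (sqrt (INR N) - y))
    (exp (bf G (/ PI) + - G * y ^ 2 - G / 2 * ln (2 * - y))).
Proof.
  intro Hy.
  set (u N := (sqrt (INR N) - y) ^ 2 / (INR N + 1) - 1).
  assert (Hq : is_lim_seq (fun N => sqrt (INR N + 1) * u N) (2 * - y)).
  { apply is_lim_seq_ext with (2 := disk_gap_lim (- y)). intro N. unfold u. f_equal. }
  assert (HM0 : forall N, 0 < INR N + 1) by (intro N; pose proof (pos_INR N); lra).
  assert (Hexponent : is_lim_seq
      (fun N => G / 2 * ((INR N + 1) * (ln (1 + u N) - u N) - ln (sqrt (INR N + 1) * u N)))
      (G / 2 * (- ((2 * - y) ^ 2 / 2) - ln (2 * - y)))).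
  { apply (is_lim_seq_scal_l _ _ (Finite _)), is_lim_seq_minus'.
    - apply is_lim_seq_mul_ln1p_sub; auto using is_lim_seq_INR_S; lra.
    - apply is_lim_seq_continuous; [apply continuity_pt_ln; lra|].
      exact Hq. }
  apply (is_lim_seq_continuous exp) in Hexponent;
    [|apply derivable_continuous_pt, derivable_pt_exp].
  apply (is_lim_seq_scal_l _ (exp (bf G (/ PI))) (Finite _)) in Hexponent.
  replace (exp (bf G (/ PI) + - G * y ^ 2 - G / 2 * ln (2 * - y)))
    with (exp (bf G (/ PI)) * exp (G / 2 * (- ((2 * - y) ^ 2 / 2) - ln (2 * - y))))
    by (rewrite <- exp_plus; f_equal; field).
  apply is_lim_seq_ext_loc with (2 := Hexponent).
  destruct (is_lim_seq_eventually_pos _ _ Hq ltac:(lra)) as [N0 HN0].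
  exists N0. intros N HN. specialize (HN0 N HN). specialize (HM0 N).
  assert (HS : 0 < sqrt (INR N + 1)) by now apply sqrt_lt_R0.
  symmetry. apply rho_d_eq; try reflexivity; try nra.
  pose proof (sqrt_pos (INR N)). lra.
Qed.

Lemma rho_c_lim (bf : R -> R -> R) (G s : R) : s < 0 ->
  is_lim_seq (fun N => / PI * rho_c bf G (INR N) s)
    (exp (bf G 1 - ln PI + G / 2 * ln (2 * PI) - G * PI * s ^ 2
          - G / 2 * ln (- (4 * PI * s)))).
Proof.
  intro Hs. pose proof PI_RGT_0 as HPI.
  set (h N := / sqrt (INR N)).
  assert (Hh : is_lim_seq h 0) by apply is_lim_seq_inv_sqrt, is_lim_seq_INR.
  assert (Hh0 : eventually (fun N => 0 < h N)).
  { exists 1%nat. intros N HN. apply Rinv_0_lt_compat, sqrt_lt_R0, lt_0_INR. lia. }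
  assert (Hratio : is_lim_seq (fun N => (1 - exp (4 * PI * s * h N)) / h N) (- (4 * PI * s))).
  { apply is_lim_seq_ext with (fun N => (1 - exp (- (- (4 * PI * s) * h N))) / h N).
    { intro N. do 3 f_equal. ring. }
    apply is_lim_seq_one_sub_exp_neg_div; [nra | exact Hh | exact Hh0]. }
  assert (Hexponent : is_lim_seq
      (fun N => bf G 1 - ln PI + G / 2 * ln (2 * PI) - G * PI * s ^ 2 + G * PI * s * h N
                - G / 2 * ln ((1 - exp (4 * PI * s * h N)) / h N))
      (bf G 1 - ln PI + G / 2 * ln (2 * PI) - G * PI * s ^ 2 + G * PI * s * 0
       - G / 2 * ln (- (4 * PI * s)))).
  { apply is_lim_seq_minus'; [apply is_lim_seq_plus'|].
    - apply is_lim_seq_const.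
    - apply (is_lim_seq_scal_l _ _ (Finite 0)), Hh.
    - apply (is_lim_seq_scal_l _ _ (Finite _)), is_lim_seq_continuous; [|exact Hratio].
      apply continuity_pt_ln. nra. }
  apply (is_lim_seq_continuous exp) in Hexponent;
    [|apply derivable_continuous_pt, derivable_pt_exp].
  rewrite Rmult_0_r, Rplus_0_r in Hexponent.
  apply is_lim_seq_ext_loc with (2 := Hexponent).
  exists 1%nat. intros N HN. symmetry. apply rho_c_eq; [apply lt_0_INR; lia | exact Hs].
Qed.

Lemma exp_div_Rpower (c d x p : R) :
  0 < x -> exp c * exp d / Rpower x p = exp (c + d - p * ln x).
Proof.
  intro Hx. unfold Rpower, Rminus. rewrite !exp_plus, exp_Ropp. field.
  apply Rgt_not_eq, exp_pos.
Qed.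

Lemma free_energy_scaling_shift (bf : R -> R -> R) (G r1 r2 : R) :
  free_energy_scaling bf -> 0 < G -> 0 < r1 -> 0 < r2 ->
  bf G r2 = bf G r1 + (1 - G / 4) * (ln r2 - ln r1).
Proof. intros [g Hg] HG Hr1 Hr2. rewrite !Hg by assumption. ring. Qed.

Lemma cylinder_exponent_eq (bf : R -> R -> R) (G y : R) :
  free_energy_scaling bf -> 0 < G -> y < 0 ->
  bf G 1 - ln PI + G / 2 * ln (2 * PI) - G * PI * (y / sqrt PI) ^ 2
    - G / 2 * ln (- (4 * PI * (y / sqrt PI)))
  = bf G (/ PI) + - G * y ^ 2 - G / 2 * ln (2 * - y).
Proof.
  intros Hbf HG Hy. pose proof PI_RGT_0 as HPI.
  assert (HsPI : 0 < sqrt PI) by now apply sqrt_lt_R0.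
  assert (EPI : sqrt PI * sqrt PI = PI) by (apply sqrt_sqrt; lra).
  assert (LPI : ln PI = 2 * ln (sqrt PI)) by (rewrite <- EPI at 1; rewrite ln_mult; lra).
  replace (- (4 * PI * (y / sqrt PI))) with (2 * - y * (2 * sqrt PI)).
  2: { set (r := sqrt PI) in *. rewrite <- EPI. field. lra. }
  replace (G * PI * (y / sqrt PI) ^ 2) with (G * y ^ 2).
  2: { set (r := sqrt PI) in *. rewrite <- EPI. field. lra. }
  rewrite (free_energy_scaling_shift bf G (/ PI) 1)
    by (try apply Rinv_0_lt_compat; assumption || lra).
  rewrite ln_1, ln_Rinv by lra.
  rewrite !ln_mult, LPI by lra. field.
Qed.

Theorem corollary1 (bf : R -> R -> R) (G y : R) :
  free_energy_scaling bf -> 0 < G -> y < 0 ->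
  is_lim_seq (fun N : nat => rho_d bf G (INR N + 1) (sqrt (INR N) - y))
    (exp (bf G (/ PI)) * exp (- G * y ^ 2) / Rpower (2 * Rabs y) (G / 2)) /\
  is_lim_seq (fun N : nat => / PI * rho_c bf G (INR N) (y / sqrt PI))
    (exp (bf G (/ PI)) * exp (- G * y ^ 2) / Rpower (2 * Rabs y) (G / 2)).
Proof.
  intros Hbf HG Hy.
  rewrite Rabs_left, exp_div_Rpower by lra.
  split.
  - now apply rho_d_lim.
  - rewrite <- cylinder_exponent_eq by assumption.
    apply rho_c_lim. apply Rdiv_neg_pos; [lra | apply sqrt_lt_R0, PI_RGT_0].
Qed.
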